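(* Let $g:\mathbb{R}^n\to\mathbb{R}\cup\{+\infty\}$ be a proper closed convex function and let $f=f_1-f_2$, where $f_1,f_2:\mathbb{R}^n\to\mathbb{R}$ are convex differentiable functions such that $\nabla f_1$ is Lipschitz continuous with modulus $L>0$, $\nabla f_2$ is Lipschitz continuous with modulus $l\ge 0$, and $L\ge l$. Let $F=f+g$, and assume $\inf F>-\infty$ and that this infimum is attained. Let $\{x^k\}$ be generated by Algorithm 1 (described in the context) and suppose $\bar\beta:=\sup_k\beta_k<\sqrt{L/(L+l)}$. Then: (i) $\sum_{k=0}^\infty\|x^{k+1}-x^k\|^2<\infty$; (ii) any accumulation point of $\{x^k\}$ is a stationary point of $F$, i.e., a point $\bar x$ with $0\in\nabla f(\bar x)+\partial g(\bar x)$.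
   Context: $\partial g$ denotes the convex subdifferential. For a proper closed convex $h$, $\mathrm{Prox}_h(v)=\arg\min_{x\in\mathbb{R}^n}\{h(x)+\tfrac12\|x-v\|^2\}$. Algorithm 1 (proximal gradient algorithm with extrapolation): choose $x^0\in\operatorname{dom} g$ and $\{\beta_k\}\subseteq[0,\sqrt{L/(L+l)}]$, set $x^{-1}=x^0$, and for $k=0,1,2,\dots$ set $y^k=x^k+\beta_k(x^k-x^{k-1})$ and $x^{k+1}=\mathrm{Prox}_{\frac1L g}\big(y^k-\tfrac1L\nabla f(y^k)\big)$. *)

From HB Require Import structures.
From mathcomp Require Import all_boot all_order all_algebra.
From mathcomp Require Import all_classical all_reals all_analysis.
Set Implicit Arguments. Unset Strict Implicit. Unset Printing Implicit Defensive.
Import Order.TTheory GRing.Theory Num.Theory.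
Import numFieldNormedType.Exports.
Local Open Scope classical_set_scope.
Local Open Scope ring_scope.

Section Defs.
Variables (R : realType) (n : nat).
Notation vec := 'rV[R]_n.

Definition dotv (u v : vec) : R := \sum_(i < n) u 0 i * v 0 i.
Definition enorm (u : vec) : R := Num.sqrt (dotv u u).

Definition convex_fun (f : vec -> R) : Prop :=
  forall (x y : vec) (t : R), 0 <= t <= 1 ->
    f (t *: x + (1 - t) *: y) <= t * f x + (1 - t) * f y.

Definition is_gradient (f : vec -> R) (G : vec -> vec) : Prop :=
  forall x : vec, differentiable f x /\ forall h : vec, 'd f x h = dotv (G x) h.

Definition lipschitz_with (G : vec -> vec) (L : R) : Prop :=
  forall x y : vec, enorm (G x - G y) <= L * enorm (x - y).

Definition edom (g : vec -> \bar R) : set vec := [set x | (g x < +oo)%E].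

Definition proper_fun (g : vec -> \bar R) : Prop :=
  (exists x, (g x < +oo)%E) /\ (forall x, (-oo < g x)%E).

Definition closed_fun (g : vec -> \bar R) : Prop :=
  closed [set p : vec * R | (g p.1 <= p.2%:E)%E].

(* convex = epigraph is convex *)
Definition convex_efun (g : vec -> \bar R) : Prop :=
  forall (x y : vec) (a b t : R), (g x <= a%:E)%E -> (g y <= b%:E)%E ->
    0 <= t <= 1 ->
    (g (t *: x + (1 - t) *: y)%R <= (t * a + (1 - t) * b)%:E)%E.

Definition subdiff (g : vec -> \bar R) (x v : vec) : Prop :=
  g x \is a fin_num /\
  forall z : vec, (g x + (dotv v (z - x)%R)%:E <= g z)%E.

Definition is_prox (c : R) (g : vec -> \bar R) (v p : vec) : Prop :=
  forall z : vec,
    (c%:E * g p + (enorm (p - v)%R ^+ 2 / 2)%:E <=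
     c%:E * g z + (enorm (z - v)%R ^+ 2 / 2)%:E)%E.

Definition accum_point (x : nat -> vec) (xb : vec) : Prop :=
  forall eps : R, 0 < eps -> forall N : nat, exists k : nat,
    (N <= k)%N /\ enorm (x k - xb) < eps.

End Defs.

From HB Require Import structures.
From mathcomp Require Import all_boot all_order all_algebra.
From mathcomp Require Import all_classical all_reals all_analysis.
From mathcomp Require Import ring lra.
Import Order.TTheory GRing.Theory Num.Theory.
Import numFieldNormedType.Exports.
Local Open Scope classical_set_scope.
Local Open Scope ring_scope.
Set Implicit Arguments. Unset Strict Implicit. Unset Printing Implicit Defensive.

(* The Lyapunov function [H k = F (x k) + L/2 |x k - x k.-1|^2] decreases along the
   iterates: the prox inequality, the descent lemma for [f1] and the gradient
   inequalities of [f1] and [f2] give [H (k+1) <= H k - del |x k - x k.-1|^2], where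
   [del > 0] because [(L + l) (sup beta)^2 < L].  As [F] is bounded below, the squared
   increments are summable and tend to [0].  Near an accumulation point [xb], both the
   extrapolated point [y k] and [x (k+1)] are close to [xb]; passing to the limit in
   the prox inequality, with the closedness of [g] supplying lower semicontinuity,
   gives [g xb <= g z + <grad f xb, z - xb> + L/2 |z - xb|^2] for every [z], and
   convexity of [g] turns this quadratic bound into [- grad f xb \in \partial g xb]. *)

Section InnerProduct.
Variables (R : realType) (n : nat).
Implicit Types (a : R) (u v w : 'rV[R]_n).

Lemma dotvC u v : dotv u v = dotv v u.
Proof. by apply: eq_bigr => i _; rewrite mulrC. Qed.

Lemma dotvDl u v w : dotv (u + v) w = dotv u w + dotv v w.
Proof. by rewrite /dotv -big_split; apply: eq_bigr => i _; rewrite !mxE mulrDl. Qed.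

Lemma dotvDr u v w : dotv w (u + v) = dotv w u + dotv w v.
Proof. by rewrite dotvC dotvDl !(dotvC w). Qed.

Lemma dotvZl a u v : dotv (a *: u) v = a * dotv u v.
Proof. by rewrite /dotv mulr_sumr; apply: eq_bigr => i _; rewrite !mxE mulrA. Qed.

Lemma dotvZr a u v : dotv u (a *: v) = a * dotv u v.
Proof. by rewrite dotvC dotvZl dotvC. Qed.

Lemma dotvNl u v : dotv (- u) v = - dotv u v.
Proof. by rewrite -scaleN1r dotvZl mulN1r. Qed.

Lemma dotvNr u v : dotv u (- v) = - dotv u v.
Proof. by rewrite dotvC dotvNl dotvC. Qed.

Lemma dotvBl u v w : dotv (u - v) w = dotv u w - dotv v w.
Proof. by rewrite dotvDl dotvNl. Qed.

Lemma dotvBr u v w : dotv w (u - v) = dotv w u - dotv w v.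
Proof. by rewrite dotvDr dotvNr. Qed.

Lemma dotv0l v : dotv 0 v = 0.
Proof. by rewrite /dotv big1 // => i _; rewrite mxE mul0r. Qed.

Lemma dotvv_ge0 u : 0 <= dotv u u.
Proof. by rewrite sumr_ge0 // => i _; rewrite -expr2 sqr_ge0. Qed.

Lemma dotvv_eq0 u : (dotv u u == 0) = (u == 0).
Proof.
apply/idP/eqP=> [|->]; last by rewrite dotv0l.
rewrite psumr_eq0 => [/allP u0|i _]; last by rewrite -expr2 sqr_ge0.
apply/rowP => j; rewrite mxE.
by apply/eqP; rewrite -sqrf_eq0 expr2; apply: (implyP (u0 j (mem_index_enum j))).
Qed.

Lemma dotvvB u v : dotv (u - v) (u - v) = dotv (v - u) (v - u).
Proof. by rewrite -opprB dotvNl dotvNr opprK. Qed.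

Lemma dotv_sqrB u v : dotv (u - v) (u - v) = dotv u u - 2 * dotv u v + dotv v v.
Proof. by rewrite dotvBl !dotvBr (dotvC v u); ring. Qed.

Lemma enorm_ge0 u : 0 <= enorm u.
Proof. exact: sqrtr_ge0. Qed.

Lemma enorm_sqr u : enorm u ^+ 2 = dotv u u.
Proof. by rewrite sqr_sqrtr // dotvv_ge0. Qed.

Lemma enormN u : enorm (- u) = enorm u.
Proof. by rewrite /enorm dotvNl dotvNr opprK. Qed.

Lemma enormB u v : enorm (u - v) = enorm (v - u).
Proof. by rewrite -enormN opprB. Qed.

Lemma enormZ a u : enorm (a *: u) = `|a| * enorm u.
Proof. by rewrite /enorm dotvZl dotvZr mulrA sqrtrM ?sqr_ge0 // -expr2 sqrtr_sqr. Qed.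

Lemma enorm_eq0 u : (enorm u == 0) = (u == 0).
Proof. by rewrite -dotvv_eq0 -enorm_sqr sqrf_eq0. Qed.

Lemma dotv_le u v : dotv u v <= enorm u * enorm v.
Proof.
have [->|u0] := eqVneq u 0; first by rewrite dotv0l mulr_ge0 ?enorm_ge0.
have [->|v0] := eqVneq v 0; first by rewrite dotvC dotv0l mulr_ge0 ?enorm_ge0.
have uv0 : 0 < enorm u * enorm v.
  by rewrite mulr_gt0 // lt0r enorm_ge0 enorm_eq0 ?u0 ?v0.
(* expanding |v| u - |u| v gives 2 |u| |v| (|u| |v| - <u, v>) *)
have := dotvv_ge0 (enorm v *: u - enorm u *: v).
rewrite dotv_sqrB !(dotvZl, dotvZr) -!enorm_sqr => H.
have : 0 <= (2 * (enorm u * enorm v)) * (enorm u * enorm v - dotv u v) by lra.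
by rewrite pmulr_rge0 ?subr_ge0 // mulr_gt0.
Qed.

Lemma normr_dotv_le u v : `|dotv u v| <= enorm u * enorm v.
Proof.
rewrite ler_norml dotv_le andbT.
by have := dotv_le u (- v); rewrite dotvNr enormN; lra.
Qed.

Lemma enormD u v : enorm (u + v) <= enorm u + enorm v.
Proof.
rewrite -(@ler_pXn2r _ 2) ?nnegrE ?addr_ge0 ?enorm_ge0 //.
rewrite enorm_sqr sqrrD !enorm_sqr dotvDl !dotvDr (dotvC v u).
by have := dotv_le u v; lra.
Qed.

Lemma enorm_lt u (c : R) : 0 <= c -> dotv u u < c ^+ 2 -> enorm u < c.
Proof. by move=> c0; rewrite -enorm_sqr ltr_pXn2r ?nnegrE ?enorm_ge0. Qed.

Lemma enorm_coord_le u j : `|u 0 j| <= enorm u.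
Proof.
rewrite -(@ler_pXn2r _ 2) ?nnegrE ?enorm_ge0 // enorm_sqr /dotv.
rewrite (bigD1 j) //= real_normK ?num_real // -expr2 lerDl sumr_ge0 // => i _.
by rewrite -expr2 sqr_ge0.
Qed.

End InnerProduct.

Lemma ler_eps01 (R : realFieldType) (x y d : R) : 0 <= d ->
  (forall t, 0 < t -> t <= 1 -> x <= y + t * d) -> x <= y.
Proof.
move=> d0 H; apply/ler_addgt0Pr => e e0.
have d1 : 0 < d + 1 by lra.
pose t := Num.min 1 (e / (d + 1)).
have t0 : 0 < t by rewrite lt_min ltr01 divr_gt0.
have t1 : t <= 1 by rewrite ge_min lexx.
have td : t * d <= e.
  apply: le_trans (_ : e / (d + 1) * (d + 1) <= e); last by rewrite divfK ?gt_eqF.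
  by apply: ler_pM; rewrite ?(ltW t0) ?ge_min ?lexx ?orbT //; lra.
by apply: le_trans (H t t0 t1) _; rewrite lerD2l.
Qed.

Section Smooth.
Variables (R : realType) (n : nat).
Implicit Types (f : 'rV[R]_n -> R) (G : 'rV[R]_n -> 'rV[R]_n) (y z h : 'rV[R]_n).

Lemma is_derive_line f G y h (t : R) : is_gradient f G ->
  is_derive t 1 (fun s => f (y + s *: h)) (dotv (G (y + t *: h)) h).
Proof.
move=> fG; have [df dfG] := fG (y + t *: h).
have dline : is_diff t (fun s : R => y + s *: h) (fun s : R => s *: h).
  have -> : (fun s : R => s *: h) = (fun s : R => 0 + s *: h).
    by apply/funext => s; rewrite add0r.
  exact: is_diffD.
have dcomp : differentiable (f \o (fun s : R => y + s *: h)) t.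
  exact: differentiable_comp.
have dl : differentiable (fun s : R => y + s *: h) t by exact: ex_diff.
have := diff_comp dl df; rewrite diff_val => Ddcomp.
apply: (@is_derive_eq _ _ _ _ _ _ _ ('D_1 (f \o (fun s : R => y + s *: h)) t)).
  exact/derivableP/diff_derivable.
by rewrite deriveE // Ddcomp /= scale1r dfG.
Qed.

Lemma lipschitz_dotv_le G (M c : R) y h : lipschitz_with G M -> 0 <= c ->
  `|dotv (G (y + c *: h) - G y) h| <= M * c * dotv h h.
Proof.
move=> GM c0; apply: le_trans (normr_dotv_le _ _) _.
have := GM (y + c *: h) y; rewrite addrAC subrr add0r enormZ ger0_norm // => lip.
by rewrite -enorm_sqr expr2 mulrA ler_wpM2r ?enorm_ge0 // -mulrA.
Qed.

Lemma descent_le f G (M : R) y z : is_gradient f G -> lipschitz_with G M ->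
  f z <= f y + dotv (G y) (z - y) + M / 2 * dotv (z - y) (z - y).
Proof.
move=> fG GM; set h := z - y.
pose phi s := f (y + s *: h) - s * dotv (G y) h - M / 2 * (s ^+ 2 * dotv h h).
pose dphi s := dotv (G (y + s *: h)) h - dotv (G y) h - M / 2 * (2 * s * dotv h h).
have phi' s : is_derive s (1 : R) phi (dphi s).
  apply: is_derive_eq.
    by apply: is_deriveB; first apply: is_deriveB; exact: is_derive_line.
  by rewrite /dphi /= !scaler0 !add0r /GRing.scale /= !mulr1; ring.
have cont : {within `[0, 1], continuous phi}.
  by apply: derivable_within_continuous => s _; case: (phi' s).
have [c /[!in_itv] /andP[/ltW c0 /ltW c1]] := MVT (@ltr01 R) (fun s _ => phi' s) cont.
rewrite /phi /dphi subr0 mulr1 scale1r scale0r addr0 expr0n expr1n /= !mul0r.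
rewrite mulr0 !mul1r !subr0 [y + h]addrC subrK => mvt.
have := lipschitz_dotv_le y h GM c0; rewrite dotvBl ler_norml => /andP[_ lip].
by have := dotvv_ge0 h; nra.
Qed.

(* The Lipschitz hypothesis is a convenience: it bounds the gradient at the
   mean-value point, replacing a limit of difference quotients. *)
Lemma convex_gradient_ge f G (M : R) y z : convex_fun f -> is_gradient f G ->
  lipschitz_with G M -> 0 <= M -> f y + dotv (G y) (z - y) <= f z.
Proof.
move=> fcvx fG GM M0; set h := z - y.
suff : dotv (G y) h <= f z - f y by lra.
apply: (ler_eps01 (d := M * dotv h h)); first by rewrite mulr_ge0 ?dotvv_ge0.
move=> t t0 t1; pose psi s := f (y + s *: h).
have psi' s : is_derive s (1 : R) psi (dotv (G (y + s *: h)) h).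
  exact: is_derive_line.
have cont : {within `[0, t], continuous psi}.
  by apply: derivable_within_continuous => s _; case: (psi' s).
have [c /[!in_itv] /andP[/ltW c0 /ltW ct]] := MVT t0 (fun s _ => psi' s) cont.
rewrite /psi subr0 scale0r addr0 => mvt.
have := fcvx z y t; rewrite (ltW t0) t1 => /(_ isT).
have -> : t *: z + (1 - t) *: y = y + t *: h.
  by apply/rowP => i; rewrite /h !mxE; ring.
move=> cvx.
have := lipschitz_dotv_le y h GM c0; rewrite dotvBl ler_norml => /andP[lip _].
have Dc : dotv (G (y + c *: h)) h <= f z - f y by rewrite -(@ler_pM2r _ t) //; lra.
have := dotvv_ge0 h; have := mulr_ge0 M0 (dotvv_ge0 h); nra.
Qed.

Lemma dc_descent_le f1 f2 G1 G2 (L l : R) y z :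
  is_gradient f1 G1 -> lipschitz_with G1 L ->
  convex_fun f2 -> is_gradient f2 G2 -> lipschitz_with G2 l -> 0 <= l ->
  f1 z - f2 z <= f1 y - f2 y + dotv (G1 y - G2 y) (z - y) + L / 2 * dotv (z - y) (z - y).
Proof.
move=> f1G G1L f2cvx f2G G2l l0.
have := descent_le y z f1G G1L; have := convex_gradient_ge y z f2cvx f2G G2l l0.
by rewrite (dotvBl (G1 y)); lra.
Qed.

Lemma dc_lower_model_le f1 f2 G1 G2 (L l : R) y z :
  convex_fun f1 -> is_gradient f1 G1 -> lipschitz_with G1 L -> 0 <= L ->
  is_gradient f2 G2 -> lipschitz_with G2 l ->
  f1 y - f2 y + dotv (G1 y - G2 y) (z - y) - l / 2 * dotv (z - y) (z - y) <= f1 z - f2 z.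
Proof.
move=> f1cvx f1G G1L L0 f2G G2l.
have := convex_gradient_ge y z f1cvx f1G G1L L0; have := descent_le y z f2G G2l.
by rewrite (dotvBl (G1 y)); lra.
Qed.

End Smooth.

Lemma lipschitz_withB (R : realType) n (G1 G2 : 'rV[R]_n -> 'rV[R]_n) (L l : R) :
  lipschitz_with G1 L -> lipschitz_with G2 l ->
  lipschitz_with (fun z => G1 z - G2 z) (L + l).
Proof.
move=> G1L G2l u v.
have -> : G1 u - G2 u - (G1 v - G2 v) = (G1 u - G1 v) - (G2 u - G2 v).
  by apply/rowP => i; rewrite !mxE; ring.
by apply: le_trans (enormD _ _) _; rewrite enormN mulrDl lerD.
Qed.

Section ConvexProx.
Variables (R : realType) (n : nat) (g : 'rV[R]_n -> \bar R).
Hypothesis g_gtNy : forall x, (-oo < g x)%E.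
Implicit Types (u v w y z p V : 'rV[R]_n).

Lemma lty_fin_num u : (g u < +oo)%E -> g u \is a fin_num.
Proof. by move=> gu; rewrite fin_numE -ltNye g_gtNy -ltey. Qed.

Lemma is_prox_fin_num (c : R) w p z : 0 < c -> (g z < +oo)%E ->
  is_prox c g w p -> g p \is a fin_num.
Proof.
move=> c0 /lty_fin_num gz /(_ z); have := g_gtNy p.
by case: (g p) => [r| |] // _; rewrite -(fineK gz) mulry gtr0_sg // mul1e addye.
Qed.

Hypothesis g_cvx : convex_efun g.

Lemma convex_efun_le u v (t : R) : g u \is a fin_num -> g v \is a fin_num ->
  0 < t -> t <= 1 ->
  g (t *: u + (1 - t) *: v) \is a fin_num /\
  fine (g (t *: u + (1 - t) *: v)) <= t * fine (g u) + (1 - t) * fine (g v).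
Proof.
move=> gu gv t0 t1.
have cvx : (g (t *: u + (1 - t) *: v) <= (t * fine (g u) + (1 - t) * fine (g v))%:E)%E.
  by apply: g_cvx; rewrite ?fineK // (ltW t0) t1.
have gw : g (t *: u + (1 - t) *: v) \is a fin_num.
  by rewrite fin_numE -ltNye g_gtNy /=; apply: contraTneq cvx => ->; rewrite leye_eq.
by split=> //; rewrite -lee_fin fineK.
Qed.

Lemma dotv_convex_comb (t : R) u v :
  dotv (t *: u + (1 - t) *: v) (t *: u + (1 - t) *: v) =
  t * dotv u u + (1 - t) * dotv v v - t * (1 - t) * dotv (u - v) (u - v).
Proof. by rewrite !(dotvDl, dotvDr, dotvNl, dotvNr, dotvZl, dotvZr) (dotvC v u); ring. Qed.

(* The prox objective is 1-strongly convex, so its minimizer beats every [z]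
   by [|z - p|^2 / 2]. *)
Lemma is_prox_le (c : R) w p z : 0 < c -> is_prox c g w p ->
  g p \is a fin_num -> g z \is a fin_num ->
  c * fine (g p) + dotv (p - w) (p - w) / 2 <=
  c * fine (g z) + dotv (z - w) (z - w) / 2 - dotv (z - p) (z - p) / 2.
Proof.
move=> c0 prox gp gz.
set a := z - w; set b := p - w.
have -> : z - p = a - b by rewrite /a /b opprB addrA subrK.
apply: (ler_eps01 (d := dotv (a - b) (a - b) / 2)); first by rewrite divr_ge0 ?dotvv_ge0.
move=> t t0 t1; have [gzt cvx] := convex_efun_le gz gp t0 t1.
have := prox (t *: z + (1 - t) *: p).
rewrite -(fineK gp) -(fineK gzt) -!EFinM -!EFinD lee_fin !enorm_sqr.
have -> : t *: z + (1 - t) *: p - w = t *: a + (1 - t) *: b.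
  by apply/rowP => i; rewrite !mxE; ring.
rewrite dotv_convex_comb => opt.
have := ler_wpM2l (ltW c0) cvx.
rewrite -(@ler_pM2l _ t) // -subr_ge0 => cvx'.
have := dotvv_ge0 (a - b); nra.
Qed.

Lemma prox_grad_le (L : R) y V p z : 0 < L ->
  is_prox L^-1 g (y - L^-1 *: V) p -> g p \is a fin_num -> g z \is a fin_num ->
  fine (g p) + dotv V (p - y) + L / 2 * dotv (p - y) (p - y) <=
  fine (g z) + dotv V (z - y) + L / 2 * dotv (z - y) (z - y) - L / 2 * dotv (z - p) (z - p).
Proof.
move=> L0 prox gp gz.
have expand q (A : R) :
    L * (L^-1 * A + dotv (q - (y - L^-1 *: V)) (q - (y - L^-1 *: V)) / 2) =
    A + dotv V (q - y) + L / 2 * dotv (q - y) (q - y) + L^-1 / 2 * dotv V V.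
  have -> : q - (y - L^-1 *: V) = (q - y) + L^-1 *: V by rewrite opprB addrA addrAC.
  move: (q - y) => a; rewrite !(dotvDl, dotvDr, dotvZl, dotvZr) (dotvC a V); field.
  by rewrite gt_eqF.
have Li0 : 0 < L^-1 by rewrite invr_gt0.
have := ler_wpM2l (ltW L0) (is_prox_le Li0 prox gp gz).
by rewrite mulrBr !expand; lra.
Qed.

Lemma quadratic_bound_subdiff xb V (L : R) : 0 <= L -> g xb \is a fin_num ->
  (forall z, g z \is a fin_num ->
     fine (g xb) <= fine (g z) + dotv V (z - xb) + L / 2 * dotv (z - xb) (z - xb)) ->
  subdiff g xb (- V).
Proof.
move=> L0 gxb quad; split=> // z.
have [gz|] := boolP (g z \is a fin_num); last first.
  by rewrite fin_numE -ltNye g_gtNy /= negbK => /eqP->; rewrite leey.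
rewrite -(fineK gxb) -(fineK gz) -EFinD lee_fin dotvNl.
suff : fine (g xb) <= fine (g z) + dotv V (z - xb) by lra.
apply: (ler_eps01 (d := L / 2 * dotv (z - xb) (z - xb))).
  by rewrite mulr_ge0 ?divr_ge0 ?dotvv_ge0.
move=> t t0 t1; have [gzt cvx] := convex_efun_le gz gxb t0 t1.
have := quad _ gzt.
have -> : t *: z + (1 - t) *: xb - xb = t *: (z - xb).
  by apply/rowP => i; rewrite !mxE; ring.
rewrite !dotvZr !dotvZl => q.
rewrite -(@ler_pM2l _ t) // -subr_ge0.
have := dotvv_ge0 (z - xb); nra.
Qed.

End ConvexProx.

Lemma prox_dc_step_le (R : realType) (n : nat) (g : 'rV[R]_n -> \bar R)
    (f1 f2 : 'rV[R]_n -> R) (G1 G2 : 'rV[R]_n -> 'rV[R]_n) (L l b : R) (u w p : 'rV[R]_n) :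
  (forall x, (-oo < g x)%E) -> convex_efun g ->
  convex_fun f1 -> convex_fun f2 -> is_gradient f1 G1 -> is_gradient f2 G2 ->
  0 < L -> 0 <= l -> lipschitz_with G1 L -> lipschitz_with G2 l ->
  let y := u + b *: (u - w) in
  is_prox L^-1 g (y - L^-1 *: (G1 y - G2 y)) p ->
  g u \is a fin_num -> g p \is a fin_num ->
  f1 p - f2 p + fine (g p) + L / 2 * dotv (p - u) (p - u) <=
  f1 u - f2 u + fine (g u) + (L + l) / 2 * (b ^+ 2 * dotv (u - w) (u - w)).
Proof.
move=> g_gtNy g_cvx f1cvx f2cvx f1G f2G L0 l0 G1L G2l y prox gu gp.
have := prox_grad_le g_gtNy g_cvx L0 prox gp gu.
have := dc_descent_le y p f1G G1L f2cvx f2G G2l l0.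
have := dc_lower_model_le y u f1cvx f1G G1L (ltW L0) f2G G2l.
have -> : dotv (u - y) (u - y) = b ^+ 2 * dotv (u - w) (u - w).
  have -> : u - y = - (b *: (u - w)) by rewrite /y opprD addrA subrr add0r.
  by rewrite dotvNl dotvNr opprK dotvZl dotvZr mulrA -expr2.
by rewrite (dotvvB u p); lra.
Qed.

Lemma sum_le_of_decrease (R : realFieldType) (H D : nat -> R) (m del : R) :
  0 < del -> (forall k, m <= H k) -> (forall k, H k.+1 + del * D k <= H k) ->
  forall N, \sum_(0 <= k < N) D k <= (H 0%N - m) / del.
Proof.
move=> del0 Hm Hdec N; rewrite ler_pdivlMr // mulrC.
suff : del * \sum_(0 <= k < N) D k <= H 0%N - H N by have := Hm N; lra.
elim: N => [|N IH]; first by rewrite big_geq // mulr0 subrr.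
by rewrite big_nat_recr //= mulrDr; have := Hdec N; lra.
Qed.

Lemma nneseries_bounded_lty (R : realType) (D : nat -> R) (M : R) :
  (forall k, 0 <= D k) -> (forall N, \sum_(0 <= k < N) D k <= M) ->
  (\sum_(0 <= k <oo) (D k)%:E < +oo)%E.
Proof.
move=> D0 DM; apply: (@le_lt_trans _ _ M%:E); last by rewrite ltry.
apply: lime_le; first by apply: is_cvg_nneseries => k _ _; rewrite lee_fin.
by apply: nearW => N; rewrite sumEFin lee_fin.
Qed.

Lemma bounded_series_cvg0 (R : realType) (D : nat -> R) (M : R) :
  (forall k, 0 <= D k) -> (forall N, \sum_(0 <= k < N) D k <= M) ->
  D @ \oo --> 0.
Proof.
move=> D0 DM; apply: cvg_series_cvg_0; apply: nondecreasing_is_cvgn.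
  by move=> a b ab; apply: (nondecreasing_series (fun k _ _ => D0 k)).
by exists M => _ [N _ <-]; exact: DM.
Qed.

Lemma closed_fun_le (R : realType) n (g : 'rV[R]_n -> \bar R) xb (r : R) :
  closed_fun g ->
  (forall e, 0 < e -> exists p, enorm (p - xb) < e /\ (g p <= (r + e)%:E)%E) ->
  (g xb <= r%:E)%E.
Proof.
move=> gcl near_r.
suff : [set q : 'rV[R]_n * R | (g q.1 <= q.2%:E)%E] (xb, r) by [].
apply: gcl => B /nbhs_ballP [e e0 eB].
have e2 : 0 < e / 2 by rewrite divr_gt0.
have [p [pxb gp]] := near_r _ e2.
exists (p, r + e / 2); split => //; apply: eB; split => /=.
  split=> // i j; rewrite (ord1 i).
  have := enorm_coord_le (xb - p) j; rewrite !mxE enormB => coord.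
  suff : `|xb 0 j - p 0 j| < e by [].
  lra.
suff : `|r - (r + e / 2)| < e by [].
rewrite opprD addrA subrr add0r normrN ger0_norm ?(ltW e2) //; lra.
Qed.

(* Local Lipschitz continuity at [(xb, xb)] of the bound on [g p] given by the prox
   inequality at an extrapolated point [y]. *)
Lemma quadratic_model_le (R : realType) n (G : 'rV[R]_n -> 'rV[R]_n) (M L : R)
    (xb z : 'rV[R]_n) :
  lipschitz_with G M -> 0 <= M -> 0 <= L ->
  exists2 K, 0 <= K & forall y p, enorm (y - xb) <= 1 -> enorm (p - xb) <= 1 ->
    dotv (G y) (z - p) + L / 2 * (dotv (z - y) (z - y) - dotv (p - y) (p - y)) <=
    dotv (G xb) (z - xb) + L / 2 * dotv (z - xb) (z - xb)
      + K * (enorm (y - xb) + enorm (p - xb)).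
Proof.
move=> GM M0 L0; set Z := z - xb.
have Z0 := enorm_ge0 Z; have Gxb0 := enorm_ge0 (G xb).
exists (M * (enorm Z + 1) + L * enorm Z + L / 2 + enorm (G xb)).
  by rewrite !addr_ge0 ?mulr_ge0 ?divr_ge0 //; lra.
move=> y p a1 c1; set a := y - xb; set c := p - xb.
have a0 := enorm_ge0 a; have c0 := enorm_ge0 c.
have lin : dotv (G y) (z - p) <=
    dotv (G xb) Z + M * (enorm Z + 1) * enorm a + enorm (G xb) * enorm c.
  have -> : z - p = Z - c by apply/rowP => i; rewrite !mxE; ring.
  rewrite -[G y](subrK (G xb)) dotvDl [dotv (G xb) _]dotvBr.
  have Zc : enorm (Z - c) <= enorm Z + 1 by have := enormD Z (- c); rewrite enormN; lra.
  have := ler_pM (enorm_ge0 _) (enorm_ge0 _) (GM y xb) Zc.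
  have := dotv_le (G y - G xb) (Z - c); have := normr_dotv_le (G xb) c.
  rewrite ler_norml -/a; lra.
have quad : dotv (z - y) (z - y) <= dotv Z Z + 2 * enorm Z * enorm a + enorm a.
  have -> : z - y = Z - a by apply/rowP => i; rewrite !mxE; ring.
  rewrite dotv_sqrB -[dotv a a]enorm_sqr.
  have := normr_dotv_le Z a; rewrite ler_norml; nra.
have L2 : 0 <= L / 2 by rewrite divr_ge0.
have quadL : L / 2 * (dotv (z - y) (z - y) - dotv (p - y) (p - y)) <=
    L / 2 * (dotv Z Z + 2 * enorm Z * enorm a + enorm a).
  by apply: ler_wpM2l => //; have := dotvv_ge0 (p - y); lra.
have : 0 <= enorm (G xb) * enorm a + (M * (enorm Z + 1) + L * enorm Z + L / 2) * enorm c.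
  by rewrite addr_ge0 ?mulr_ge0 // !addr_ge0 ?mulr_ge0 //; lra.
lra.
Qed.

Section ProxGradientExtrapolation.
Variables (R : realType) (n : nat) (g : 'rV[R]_n -> \bar R) (f1 f2 : 'rV[R]_n -> R)
  (G1 G2 : 'rV[R]_n -> 'rV[R]_n) (L l : R) (beta : nat -> R) (x : nat -> 'rV[R]_n).
Hypotheses (g_gtNy : forall z, (-oo < g z)%E) (g_cl : closed_fun g) (g_cvx : convex_efun g).
Hypotheses (f1_cvx : convex_fun f1) (f2_cvx : convex_fun f2).
Hypotheses (f1G : is_gradient f1 G1) (f2G : is_gradient f2 G2).
Hypotheses (L_gt0 : 0 < L) (l_ge0 : 0 <= l).
Hypotheses (G1L : lipschitz_with G1 L) (G2l : lipschitz_with G2 l).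
Hypothesis F_min :
  exists xs, forall z, ((f1 xs - f2 xs)%:E + g xs <= (f1 z - f2 z)%:E + g z)%E.
Hypothesis x0_dom : x 0%N \in edom g.
Hypothesis beta_bnd : forall k, 0 <= beta k <= Num.sqrt (L / (L + l)).
Hypothesis beta_sup : sup (range beta) < Num.sqrt (L / (L + l)).

Let Ll_gt0 : 0 < L + l := ltr_wpDr l_ge0 L_gt0.

Let y k := x k + beta k *: (x k - x k.-1).

Hypothesis x_prox :
  forall k, is_prox L^-1 g (y k - L^-1 *: (G1 (y k) - G2 (y k))) (x k.+1).

Let Fx k := f1 (x k) - f2 (x k) + fine (g (x k)).
(* [0.-1 = 0] encodes [x^{-1} = x^0], hence [D 0 = 0]. *)
Let D k := dotv (x k - x k.-1) (x k - x k.-1).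

Lemma iterates_fin_num k : g (x k) \is a fin_num.
Proof.
have x0lt : (g (x 0%N) < +oo)%E by move: x0_dom; rewrite inE.
have Li0 : 0 < L^-1 by rewrite invr_gt0.
case: k => [|k]; first exact: lty_fin_num.
exact (is_prox_fin_num g_gtNy Li0 x0lt (x_prox k)).
Qed.

Lemma iterates_step_le k :
  Fx k.+1 + L / 2 * D k.+1 <= Fx k + (L + l) / 2 * (beta k ^+ 2 * D k).
Proof.
exact: (prox_dc_step_le g_gtNy g_cvx f1_cvx f2_cvx f1G f2G L_gt0 l_ge0 G1L G2l
  (x_prox k) (iterates_fin_num k) (iterates_fin_num k.+1)).
Qed.

Lemma iterates_value_lb : exists m, forall k, m <= Fx k.
Proof.
have [xs xs_min] := F_min.
have gxs : g xs \is a fin_num.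
  rewrite fin_numE -ltNye g_gtNy /=; apply: contraTneq (xs_min (x 0%N)) => gxsy.
  by rewrite gxsy addey // -(fineK (iterates_fin_num 0)) -EFinD leye_eq.
exists (f1 xs - f2 xs + fine (g xs)) => k; have := xs_min (x k).
by rewrite -(fineK gxs) -(fineK (iterates_fin_num k)) -!EFinD lee_fin.
Qed.

Lemma extrapolation_margin :
  exists2 del, 0 < del & forall k, (L + l) / 2 * beta k ^+ 2 <= L / 2 - del.
Proof.
set bb := sup (range beta).
have beta_le k : beta k <= bb.
  apply: ub_le_sup; last by exists k.
  by exists (Num.sqrt (L / (L + l))) => _ [j _ <-]; case/andP: (beta_bnd j).
have bb0 : 0 <= bb by apply: le_trans (beta_le 0%N); case/andP: (beta_bnd 0%N).
have bb2 : (L + l) * bb ^+ 2 < L.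
  rewrite mulrC -ltr_pdivlMr // -(@sqr_sqrtr _ (L / (L + l))) ?divr_ge0 ?ltW //.
  by rewrite ltrXn2r ?nnegrE ?sqrtr_ge0.
exists ((L - (L + l) * bb ^+ 2) / 2); first by rewrite divr_gt0 // subr_gt0.
move=> k; have /andP[bk0 _] := beta_bnd k.
have : beta k ^+ 2 <= bb ^+ 2 by rewrite lerXn2r ?nnegrE ?beta_le.
rewrite -(ler_pM2l (_ : 0 < (L + l) / 2)) ?divr_gt0 //; lra.
Qed.

Lemma increments_sum_bounded : exists M, forall N, \sum_(0 <= k < N) D k <= M.
Proof.
have [m m_le] := iterates_value_lb; have [del del0 margin] := extrapolation_margin.
have D0 k : 0 <= D k by exact: dotvv_ge0.
have L2 : 0 <= L / 2 by rewrite divr_ge0 ?ltW.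
pose H k := Fx k + L / 2 * D k.
exists ((H 0%N - m) / del); apply: sum_le_of_decrease del0 _ _ => k.
  by rewrite /H; have := m_le k; have := mulr_ge0 L2 (D0 k); lra.
have := iterates_step_le k; have := ler_wpM2r (D0 k) (margin k).
by rewrite /H; lra.
Qed.

Lemma increments_cvg0 : D @ \oo --> 0.
Proof.
have [M DM] := increments_sum_bounded.
exact: bounded_series_cvg0 (fun k => dotvv_ge0 _) DM.
Qed.

Lemma sq_increments_summable :
  (\sum_(0 <= k <oo) ((enorm (x k.+1 - x k)) ^+ 2)%:E < +oo)%E.
Proof.
have [M DM] := increments_sum_bounded.
apply: (nneseries_bounded_lty (M := M)) => [k|N]; first exact: sqr_ge0.
under eq_bigr do rewrite enorm_sqr.
apply: le_trans (DM N.+1); rewrite big_nat_recl //.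
have -> : D 0%N = 0 by rewrite /D subrr dotv0l.
by rewrite add0r.
Qed.

Lemma beta_le1 k : beta k <= 1.
Proof.
have /andP[_ bk] := beta_bnd k; apply: le_trans bk _.
by rewrite -sqrtr1 ler_sqrt // ler_pdivrMr // mul1r lerDl.
Qed.

Lemma iterates_near xb : accum_point x xb -> forall eta, 0 < eta ->
  exists k, enorm (y k - xb) < eta /\ enorm (x k.+1 - xb) < eta.
Proof.
move=> acc eta eta0; have eta3 : 0 < eta / 3 by rewrite divr_gt0.
have /cvgrPdist_lt /(_ _ (exprn_gt0 2 eta3)) [N _ DN] := increments_cvg0.
have small k : (N <= k)%N -> enorm (x k - x k.-1) < eta / 3.
  move=> kN; apply: enorm_lt; first exact: ltW.
  by have := DN k kN; rewrite sub0r normrN ger0_norm ?dotvv_ge0.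
have [k [kN xk]] := acc _ eta3 N.
have d0 := small k kN.
have d1 : enorm (x k.+1 - x k) < eta / 3 := small k.+1 (leqW kN).
have /andP[bk0 _] := beta_bnd k; have bk1 := beta_le1 k.
exists k; split.
  rewrite /y addrAC; apply: le_lt_trans (enormD _ _) _.
  by rewrite enormZ ger0_norm //; have := enorm_ge0 (x k - x k.-1); nra.
have -> : x k.+1 - xb = (x k.+1 - x k) + (x k - xb) by rewrite addrA subrK.
by apply: le_lt_trans (enormD _ _) _; lra.
Qed.

Lemma limit_quadratic_bound xb : accum_point x xb -> forall z, g z \is a fin_num ->
  (g xb <= (fine (g z) + dotv (G1 xb - G2 xb) (z - xb)
            + L / 2 * dotv (z - xb) (z - xb))%:E)%E.
Proof.
move=> acc z gz.
have [K K0 model] :=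
  quadratic_model_le xb z (lipschitz_withB G1L G2l) (ltW Ll_gt0) (ltW L_gt0).
apply: closed_fun_le g_cl _ => e e0.
pose eta := Num.min 1 (e / (2 * K + 1)).
have K1 : 0 < 2 * K + 1 by lra.
have eta0 : 0 < eta by rewrite lt_min ltr01 divr_gt0.
have eta1 : eta <= 1 by rewrite ge_min lexx.
have etaK : eta * (2 * K + 1) <= e by rewrite -ler_pdivlMr // ge_min lexx orbT.
have [k [yk pk]] := iterates_near acc eta0.
exists (x k.+1); split; first by nra.
have := model (y k) (x k.+1) (ltW (lt_le_trans yk eta1)) (ltW (lt_le_trans pk eta1)).
move=> /= mdl.
have := prox_grad_le g_gtNy g_cvx L_gt0 (x_prox k) (iterates_fin_num k.+1) gz.
set V := G1 (y k) - G2 (y k) in mdl *.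
have -> : dotv V (z - y k) = dotv V (z - x k.+1) + dotv V (x k.+1 - y k).
  by rewrite -dotvDr addrA subrK.
rewrite -(fineK (iterates_fin_num k.+1)) lee_fin => prox_le.
have L2 : 0 <= L / 2 by rewrite divr_ge0 ?ltW.
have := mulr_ge0 L2 (dotvv_ge0 (z - x k.+1)).
have : K * (enorm (y k - xb) + enorm (x k.+1 - xb)) <= K * (2 * eta).
  by apply: ler_wpM2l => //; lra.
lra.
Qed.

Lemma accum_point_stationary xb : accum_point x xb ->
  exists v, subdiff g xb v /\ G1 xb - G2 xb + v = 0.
Proof.
move=> acc; have bound := limit_quadratic_bound acc.
have gxb : g xb \is a fin_num.
  rewrite fin_numE -ltNye g_gtNy /=; apply: contraTneq (bound _ (iterates_fin_num 0)) => ->.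
  by rewrite leye_eq.
exists (- (G1 xb - G2 xb)); split; last exact: subrr.
apply: (quadratic_bound_subdiff g_gtNy g_cvx (ltW L_gt0) gxb) => z gz.
by rewrite -lee_fin fineK // bound.
Qed.

End ProxGradientExtrapolation.

Theorem lemma3p4 (R : realType) (n : nat)
  (g : 'rV[R]_n -> \bar R) (f1 f2 : 'rV[R]_n -> R)
  (G1 G2 : 'rV[R]_n -> 'rV[R]_n) (L l : R)
  (beta : nat -> R) (x : nat -> 'rV[R]_n) :
  proper_fun g -> closed_fun g -> convex_efun g ->
  convex_fun f1 -> convex_fun f2 ->
  is_gradient f1 G1 -> is_gradient f2 G2 ->
  0 < L -> 0 <= l -> l <= L ->
  lipschitz_with G1 L -> lipschitz_with G2 l ->
  let F := fun z => ((f1 z - f2 z)%:E + g z)%E in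
  (-oo < ereal_inf (range F))%E ->
  (exists xs, forall z, (F xs <= F z)%E) ->
  x 0%N \in edom g ->
  (forall k, 0 <= beta k <= Num.sqrt (L / (L + l))) ->
  sup (range beta) < Num.sqrt (L / (L + l)) ->
  (forall k : nat,
     let y := x k + beta k *: (x k - x k.-1) in
     is_prox L^-1 g (y - L^-1 *: (G1 y - G2 y)) (x k.+1)) ->
  ((\sum_(0 <= k <oo) ((enorm (x k.+1 - x k)) ^+ 2)%:E < +oo)%E /\
   (forall xb, accum_point x xb ->
      exists v, subdiff g xb v /\ G1 xb - G2 xb + v = 0)).
Proof.
move=> [_ g_gtNy] g_cl g_cvx f1_cvx f2_cvx f1G f2G L_gt0 l_ge0 _ G1L G2l F _ F_min
  x0_dom beta_bnd beta_sup x_prox.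
split.
  exact (sq_increments_summable g_gtNy g_cvx f1_cvx f2_cvx f1G f2G L_gt0 l_ge0
    G1L G2l F_min x0_dom beta_bnd beta_sup x_prox).
exact (accum_point_stationary g_gtNy g_cl g_cvx f1_cvx f2_cvx f1G f2G L_gt0 l_ge0
  G1L G2l F_min x0_dom beta_bnd beta_sup x_prox).
Qed.
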